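(* Let $M,M'\in\mathrm{Mat}(2,\mathbb{Z})$ have the same trace and the same determinant, and suppose $\mathrm{mgcd}(M')=\mathrm{mgcd}(M)=1$. Then the toral endomorphisms defined by $M$ and $M'$ have the same local statistics on all lattices $L_n$, $n\in\mathbb{N}$.
   Context: For $M=\begin{pmatrix}a&b\\c&d\end{pmatrix}$, $\mathrm{mgcd}(M)=\gcd(b,c,d-a)\ge0$. $L_n=\{(\frac{k}{n},\frac{\ell}{n}):0\le k,\ell<n\}\subset\mathbb{T}^2=\mathbb{R}^2/\mathbb{Z}^2$, with integer matrices acting by multiplication mod $1$. Two integer matrices have the same local statistics on $L_n$ if the directed pseudo-graphs on $L_n$ they induce (vertices the points of $L_n$, a directed edge from $x$ to $Mx$) are isomorphic as graphs. *)

From HB Require Import structures.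
From mathcomp Require Import all_boot all_order all_algebra.
Set Implicit Arguments. Unset Strict Implicit. Unset Printing Implicit Defensive.
Import Order.TTheory GRing.Theory Num.Theory.
Local Open Scope ring_scope.

Definition mgcd (M : 'M[int]_2) : int :=
  gcdz (gcdz (M 0 1) (M 1 0)) (M 1 1 - M 0 0).

(* The lattice L_n = {(k/n, l/n) : 0 <= k, l < n} is represented by
   'I_n * 'I_n, the pair (k, l) standing for the point (k/n, l/n). *)
Definition Lpt (n : nat) := ('I_n * 'I_n)%type.

(* Directed edge x -> M x (mod 1) on L_n: M (k/n, l/n) mod 1 is the point
   ((a k + b l mod n)/n, (c k + d l mod n)/n). *)
Definition toral_edge (M : 'M[int]_2) (n : nat) : rel (Lpt n) :=
  fun x y =>
    ((y.1 : nat)%:Z == modz (M 0 0 * (x.1 : nat)%:Z + M 0 1 * (x.2 : nat)%:Z) n%:Z)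
    && ((y.2 : nat)%:Z == modz (M 1 0 * (x.1 : nat)%:Z + M 1 1 * (x.2 : nat)%:Z) n%:Z).

(* Same local statistics on L_n: the induced directed pseudo-graphs are
   isomorphic, i.e. there is a bijection of vertices preserving and
   reflecting edges. *)
Definition same_local_stats (M M' : 'M[int]_2) (n : nat) : Prop :=
  exists f : Lpt n -> Lpt n,
    bijective f /\ forall x y, @toral_edge M n x y = @toral_edge M' n (f x) (f y).

(* For n >= 2 both actions become, in suitable coordinates over Z/n, the companion
   map (s, t) |-> (-det * t, s + tr * t), which depends only on the trace and the
   determinant.  The coordinates are those of a cyclic vector v, i.e. one for which
   (v, M v) is a basis of (Z/n)^2: det(v, M v) is the binary quadratic form
   c x^2 + (d - a) x y - b y^2, and mgcd M = 1 makes it primitive, so a product-of-primes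
   choice of (x, y) makes it prime to n.  Lattices with n <= 1 have at most one point. *)

From HB Require Import structures.
From mathcomp Require Import all_boot all_order all_algebra.
From mathcomp Require Import ring.
Import Order.TTheory GRing.Theory Num.Theory.

Set Implicit Arguments. Unset Strict Implicit.
Local Open Scope ring_scope.

Section CyclicBasis.

Variables (R : comUnitRingType) (a b c d : R).

Definition mx2_act (u : R * R) : R * R := (a * u.1 + b * u.2, c * u.1 + d * u.2).

Definition companion_act (T D : R) (u : R * R) : R * R := (- D * u.2, u.1 + T * u.2).

Definition cyclic_det (x y : R) : R := x * (c * x + d * y) - y * (a * x + b * y).

Definition cyclic_coord (x y : R) (u : R * R) : R * R :=
  let: (x', y') := mx2_act (x, y) in (u.1 * x + u.2 * x', u.1 * y + u.2 * y').

(* Cayley-Hamilton: M^2 v = (tr M) M v - (det M) v. *)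
Lemma mx2_act_cyclic_coord x y u :
  mx2_act (cyclic_coord x y u) =
  cyclic_coord x y (companion_act (a + d) (a * d - b * c) u).
Proof. by rewrite /mx2_act /cyclic_coord /companion_act /=; congr (_, _); ring. Qed.

Definition cyclic_uncoord (x y : R) (w : R * R) : R * R :=
  let: (x', y') := mx2_act (x, y) in
  ((y' * w.1 - x' * w.2) / cyclic_det x y, (x * w.2 - y * w.1) / cyclic_det x y).

Lemma cyclic_coordK x y :
  cyclic_det x y \is a GRing.unit -> cancel (cyclic_coord x y) (cyclic_uncoord x y).
Proof.
move=> det_unit [s t]; rewrite /cyclic_uncoord /cyclic_coord /mx2_act /=.
by congr (_, _); apply: (canLR (mulrK det_unit)); rewrite /cyclic_det; ring.
Qed.

End CyclicBasis.

Lemma prime_dvd_prod_seq (q : nat) (P : pred nat) (s : seq nat) :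
  prime q -> all prime s -> (q %| \prod_(p <- s | P p) p)%N = (q \in s) && P q.
Proof.
move=> q_pr; elim: s => [|p s IH] /=.
  by rewrite big_nil dvdn1 ?in_nil; case: eqP q_pr => // ->.
case/andP=> p_pr s_pr; rewrite big_cons in_cons.
case: (eqVneq q p) => [<-|q_p] /=.
  by case P_q: (P q); rewrite ?IH ?P_q ?andbF // (dvdn_mulr _ (dvdnn q)).
case: (P p) => /=; last exact: IH.
by rewrite Euclid_dvdM // dvdn_prime2 // (negPf q_p) IH.
Qed.

Lemma coprime_prime_ndvd (m n : nat) :
  (0 < n)%N -> (forall p, prime p -> (p %| n)%N -> ~~ (p %| m)%N) -> coprime m n.
Proof.
move=> n_gt0 no_common_prime; apply: contraT => not_coprime.
have g_gt1 : (1 < gcdn m n)%N.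
  by move: not_coprime; rewrite /coprime ltn_neqAle eq_sym gcdn_gt0 n_gt0 orbT => ->.
have := no_common_prime _ (pdiv_prime g_gt1) (dvdn_trans (pdiv_dvd _) (dvdn_gcdr m n)).
by rewrite (dvdn_trans (pdiv_dvd _) (dvdn_gcdl m n)).
Qed.

Lemma Euclidz_dvdM (p : nat) (u v : int) : prime p ->
  ((p : int) %| u * v)%Z = ((p : int) %| u)%Z || ((p : int) %| v)%Z.
Proof. by move=> p_pr; rewrite !dvdzE abszM Euclid_dvdM. Qed.

(* Modulo p the form [cyclic_det] is c x^2 + (d - a) x y - b y^2; the divisibility
   constraints on x and y kill all but one of its monomials, which p does not divide. *)
Lemma prime_ndvd_cyclic_det (p : nat) (a b c d x y : int) : prime p ->
  gcdz (gcdz b c) (d - a) = 1 ->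
  ((p : int) %| x)%Z = ((p : int) %| c)%Z && ~~ ((p : int) %| b)%Z ->
  ((p : int) %| y)%Z = ~~ ((p : int) %| c)%Z ->
  ~~ ((p : int) %| cyclic_det a b c d x y)%Z.
Proof.
move=> p_pr gcd1 p_x p_y.
have p_ndvd_gcd : ~~ ((p : int) %| gcdz (gcdz b c) (d - a))%Z.
  by rewrite gcd1 dvdz1 /= neq_ltn prime_gt1 ?orbT.
case p_c: ((p : int) %| c)%Z in p_x p_y; last first.
  have p_rest : ((p : int) %| y * ((d - a) * x - b * y))%Z by rewrite dvdz_mulr ?p_y.
  rewrite (_ : cyclic_det _ _ _ _ _ _ = c * x * x + y * ((d - a) * x - b * y)).
    by rewrite rpredDr // !Euclidz_dvdM // p_c p_x.
  by rewrite /cyclic_det; ring.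
case p_b: ((p : int) %| b)%Z in p_x; last first.
  have p_rest : ((p : int) %| x * (c * x + (d - a) * y))%Z by rewrite dvdz_mulr ?p_x.
  rewrite (_ : cyclic_det _ _ _ _ _ _ = - (b * y * y) + x * (c * x + (d - a) * y)).
    by rewrite rpredDr // rpredN !Euclidz_dvdM // p_b p_y.
  by rewrite /cyclic_det; ring.
have p_da : ~~ ((p : int) %| d - a)%Z by move: p_ndvd_gcd; rewrite !dvdz_gcd p_b p_c.
have p_rest : ((p : int) %| c * x * x - b * y * y)%Z.
  by rewrite rpredB // -mulrA dvdz_mulr.
rewrite (_ : cyclic_det _ _ _ _ _ _ = (d - a) * x * y + (c * x * x - b * y * y)).
  by rewrite rpredDr // !Euclidz_dvdM // (negPf p_da) p_x p_y.
by rewrite /cyclic_det; ring.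
Qed.

Lemma exists_cyclic_vector_mod (a b c d : int) (n : nat) : (0 < n)%N ->
  gcdz (gcdz b c) (d - a) = 1 ->
  exists x y : int, coprime n `|cyclic_det a b c d x y|.
Proof.
move=> n_gt0 gcd1.
pose x := (\prod_(p <- primes n | (p %| `|c|) && ~~ (p %| `|b|)) p)%N.
pose y := (\prod_(p <- primes n | ~~ (p %| `|c|)) p)%N.
exists x, y; rewrite coprime_sym; apply: coprime_prime_ndvd => // p p_pr p_n.
have p_primes : p \in primes n by rewrite mem_primes p_pr n_gt0.
have := @prime_ndvd_cyclic_det p a b c d x y p_pr gcd1; rewrite !dvdzE /=.
by apply; rewrite /x /y !prime_dvd_prod_seq ?all_prime_primes // p_primes.
Qed.

Lemma det_mx2 (R : comNzRingType) (A : 'M[R]_2) :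
  \det A = A 0 0 * A 1 1 - A 0 1 * A 1 0.
Proof.
rewrite (expand_det_row _ 0) !big_ord_recl big_ord0 /cofactor !det_mx11 !mxE /=.
have lift01 : lift (0 : 'I_2) (0 : 'I_1) = 1 by apply/val_inj.
have lift10 : lift (1 : 'I_2) (0 : 'I_1) = 0 by apply/val_inj.
have ord0E : ord0 = 0 :> 'I_2 by apply/val_inj.
by rewrite lift01 lift10 ord0E /= expr0 expr1 mul1r mulN1r mulrN addr0.
Qed.

Lemma mxtrace_mx2 (R : nzRingType) (A : 'M[R]_2) : \tr A = A 0 0 + A 1 1.
Proof.
have lift00 : lift ord0 (ord0 : 'I_1) = 1 :> 'I_2 by apply/val_inj.
by rewrite /mxtrace !big_ord_recl big_ord0 addr0 lift00.
Qed.

Lemma Zp_intr_modz (n : nat) (z : int) : ((z %% n.+2)%Z)%:~R = z%:~R :> 'Z_n.+2.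
Proof.
rewrite [in RHS](divz_eq z n.+2) [in RHS]intrD [in RHS]intrM.
by rewrite (_ : (n.+2)%:~R = 0 :> 'Z_n.+2) ?mulr0 ?add0r //; exact: pchar_Zp.
Qed.

Lemma eqZp_modz (n : nat) (i : 'Z_n.+2) (z : int) :
  (Posz i == (z %% n.+2)%Z) = (i == z%:~R).
Proof.
rewrite -Zp_intr_modz.
have: (0 <= z %% n.+2)%Z && ((z %% n.+2)%Z < n.+2) by rewrite modz_ge0 ?ltz_pmod.
case: (z %% _)%Z => // k; rewrite ltz_nat eqz_nat => /= k_lt.
rewrite -pmulrn; apply/eqP/eqP => [<- | ->]; first by rewrite natr_Zp.
by rewrite val_Zp_nat // modn_small.
Qed.

Lemma unitZp_intr (n : nat) (z : int) :
  coprime n.+2 `|z| -> (z%:~R : 'Z_n.+2) \is a GRing.unit.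
Proof. by case: z => k; rewrite ?NegzE ?intrN ?unitrN -pmulrn unitZpE. Qed.

Lemma toral_edge_Zp (M : 'M[int]_2) (n : nat) (u w : Lpt n.+2) :
  toral_edge M u w =
  ((w : 'Z_n.+2 * 'Z_n.+2) ==
     mx2_act (M 0 0)%:~R (M 0 1)%:~R (M 1 0)%:~R (M 1 1)%:~R (u : 'Z_n.+2 * 'Z_n.+2)).
Proof.
by rewrite /toral_edge /mx2_act !eqZp_modz !intrD !intrM -!pmulrn !natr_Zp; case: w.
Qed.

Lemma toral_edge_companion (M : 'M[int]_2) (n : nat) : mgcd M = 1 ->
  exists h : Lpt n.+2 -> Lpt n.+2, bijective h /\
    forall u w, toral_edge M (h u) (h w) =
      ((w : 'Z_n.+2 * 'Z_n.+2) == companion_act (\tr M)%:~R (\det M)%:~R u).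
Proof.
move=> gcd1.
have [x [y coprime_det]] := exists_cyclic_vector_mod (isT : (0 < n.+2)%N) gcd1.
pose cast (z : int) : 'Z_n.+2 := z%:~R.
pose A := cast (M 0 0); pose B := cast (M 0 1); pose C := cast (M 1 0); pose D := cast (M 1 1).
pose h := cyclic_coord A B C D (cast x) (cast y).
have det_unit : cyclic_det A B C D (cast x) (cast y) \is a GRing.unit.
  by rewrite /A /B /C /D /cast /cyclic_det -!(intrB, intrD, intrM) unitZp_intr.
have h_inj : injective h := can_inj (cyclic_coordK det_unit).
exists h; split; first exact: injF_bij.
move=> u w; rewrite toral_edge_Zp mx2_act_cyclic_coord (inj_eq h_inj).
by rewrite mxtrace_mx2 det_mx2 intrD intrB !intrM.
Qed.

Theorem corollary35 (M M' : 'M[int]_2) :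
  \tr M = \tr M' -> \det M = \det M' ->
  mgcd M' = 1 -> mgcd M = 1 ->
  forall n : nat, same_local_stats M M' n.
Proof.
move=> eq_tr eq_det gcd1' gcd1 [|[|n]].
- by exists id; split=> [|[[]]]; first by exists id.
- by exists id; split=> [|x y]; [exists id | rewrite /toral_edge !modz1].
have [h [[h_inv hK h_invK] h_edge]] := toral_edge_companion n gcd1.
have [h' [h'_bij h'_edge]] := toral_edge_companion n gcd1'.
exists (h' \o h_inv); split; first by apply: bij_comp h'_bij _; exists h.
by move=> x y; rewrite -[x]h_invK -[y]h_invK h_edge /= !hK h'_edge eq_tr eq_det.
Qed.
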